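(* Let $F(x)=\frac{1-x-\sqrt{1-2x-3x^2}}{2x^2}$ be the generating function of the Motzkin numbers. Then $D_{3,-3}(0)=1$, $D_{3,-3}(1)=D_{3,-3}(2)=D_{3,-3}(3)=0$, and for every integer $k\ge1$, $$D_{3,-3}(3k+1)=k,\qquad D_{3,-3}(3k+2)=0,\qquad D_{3,-3}(3k+3)=-k.$$
   Context: For a power series $F(x)=\sum_{n\ge0}a_nx^n$ and $K\ge1$, write $F(x)^K=\sum_{n\ge0}a_{K,n}x^n$ and set $a_{K,n}=0$ for $n<0$. For $M\in\mathbb{Z}$ and $K,N\in\mathbb{N}$ with $K\ge1$, define the shifted Hankel determinant $D_{K,M}(N)=\det(a_{K,i+j+M})_{i,j=0}^{N-1}$, with $D_{K,M}(0)=1$. *)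

From HB Require Import structures.
From mathcomp Require Import all_boot all_order all_algebra.
Set Implicit Arguments. Unset Strict Implicit. Unset Printing Implicit Defensive.
Import GRing.Theory.
Local Open Scope ring_scope.

(* Motzkin numbers via the standard recurrence
   M_0 = 1, M_{n+1} = M_n + sum_{i=0}^{n-1} M_i M_{n-1-i},
   equivalent to F = 1 + x F + x^2 F^2, whose power-series solution is
   F(x) = (1 - x - sqrt(1-2x-3x^2)) / (2x^2). *)
Definition motzkin_next (s : seq nat) : nat :=
  let n := (size s).-1 in
  (nth 0 s n + \sum_(i < n) nth 0 s i * nth 0 s (n.-1 - i))%N.

Fixpoint motzkin_list (n : nat) : seq nat :=
  match n with
  | 0 => [:: 1%N]
  | n'.+1 => let s := motzkin_list n' in rcons s (motzkin_next s)
  end.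

Definition motzkin (n : nat) : nat := nth 0%N (motzkin_list n) n.

Fixpoint pow_coef (a : nat -> int) (K n : nat) : int :=
  match K with
  | 0 => (n == 0%N)%:R
  | K'.+1 => \sum_(i < n.+1) a i * pow_coef a K' (n - i)
  end.

Definition coefK (a : nat -> int) (K : nat) (m : int) : int :=
  match m with
  | Posz n => pow_coef a K n
  | Negz _ => 0
  end.

Definition hankel_det (a : nat -> int) (K : nat) (M : int) (N : nat) : int :=
  \det (\matrix_(i < N, j < N) coefK a K ((i + j)%:Z + M)).

Definition motzkinZ (n : nat) : int := (motzkin n)%:Z.

From Pilot Require Import Defs.
From HB Require Import structures.
From mathcomp Require Import all_boot all_order all_algebra.
From mathcomp Require Import ring zify.
Import GRing.Theory.
Local Open Scope ring_scope.

(* Since F = 1 + x F + x^2 F^2, the coefficient a_{3,n} of F^3 counts Motzkin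
   paths of length n + 2 from height 0 to height 2, so the Hankel matrix
   (a_{3,i+j-3}) factors through the unitriangular matrix T of path counts from
   height 0: it equals L (Y K) T^T with L = lfactor and Y = ymx unitriangular.
   The rows of Y K = kcoef express the paths starting at height 2 (and one step
   shorter, for the first row) in terms of those starting at height 0, and after
   the elimination Y the matrix K = kred is an identity block bordered by one row
   and one column built from the 3-periodic sequence rho = (1, -1, 0, ...). Its
   determinant reduces to a sum of rho_{x+2} sigma_x over one parity class of x,
   which gives
   D_{3,-3}(m + 2) = - rho_{m+2} * floor((m+1)/3). *)

Fixpoint mpath (n i j : nat) : int :=
  match n with
  | 0 => (i == j)%:R
  | n'.+1 => (if j is j'.+1 then mpath n' i j' else 0) + mpath n' i j + mpath n' i j.+1
  end.

Lemma mpathSl n i j : mpath n.+1 i j =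
  (if i is i'.+1 then mpath n i' j else 0) + mpath n i j + mpath n i.+1 j.
Proof.
elim: n i j => [|n IH] i j.
  by case: i => [|i]; case: j => [|j] /=; rewrite ?eqSS ?(eq_sym 0%N); ring.
have mpathS i' j' : mpath n.+2 i' j' =
    (if j' is j''.+1 then mpath n.+1 i' j'' else 0) + mpath n.+1 i' j' + mpath n.+1 i' j'.+1.
  by [].
by case: i => [|i]; case: j => [|j]; rewrite [LHS]mpathS ![in LHS]IH /=; ring.
Qed.

Lemma mpathC n i j : mpath n i j = mpath n j i.
Proof.
elim: n i j => [|n IH] i j; first by rewrite /= eq_sym.
by case: i => [|i]; rewrite mpathSl /= -!(IH j).
Qed.

Lemma mpath_far n i j : (i + n < j)%N -> mpath n i j = 0.
Proof.
elim: n j => [|n IH] j /=; first by rewrite addn0 => /ltn_eqF ->.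
by case: j => [|j] ? //; rewrite !IH ?addr0 //; lia.
Qed.

Lemma mpath_top n i : mpath n i (i + n) = 1.
Proof.
elim: n => [|n IH] /=; first by rewrite addn0 eqxx.
by rewrite addnS IH !mpath_far ?addr0 ?add0r //; lia.
Qed.

Lemma sum_mul_delta {R : pzSemiRingType} (B j : nat) (F : nat -> R) :
  \sum_(k < B) F k * (k == j :> nat)%:R = if (j < B)%N then F j else 0.
Proof.
transitivity (\sum_(k < B | k == j :> nat) F k); last exact: big_ord1_eq.
rewrite [RHS]big_mkcond /=; apply: eq_bigr => k _.
by case: eqP; rewrite ?mulr1 ?mulr0.
Qed.

Lemma sum_delta_mul {R : pzSemiRingType} B j (F : nat -> R) :
  \sum_(k < B) (k == j :> nat)%:R * F k = if (j < B)%N then F j else 0.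
Proof.
transitivity (\sum_(k < B | k == j :> nat) F k); last exact: big_ord1_eq.
rewrite [RHS]big_mkcond /=; apply: eq_bigr => k _.
by case: eqP; rewrite ?mul1r ?mul0r.
Qed.

Lemma mpathD a b i j B : (i + a < B)%N ->
  mpath (a + b) i j = \sum_(k < B) mpath a i k * mpath b k j.
Proof.
move=> ltB; elim: b j => [|b IH] j.
  rewrite addn0 /= sum_mul_delta; case: ltnP => // leBj.
  by rewrite mpath_far //; lia.
rewrite addnS /=.
by case: j => [|j]; rewrite ?add0r !IH -!big_split; apply: eq_bigr => k _ /=; ring.
Qed.

Lemma size_motzkin_list n : size (motzkin_list n) = n.+1.
Proof. by elim: n => //= n IH; rewrite size_rcons IH. Qed.

Lemma nth_motzkin_list n i : (i <= n)%N -> nth 0%N (motzkin_list n) i = motzkin i.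
Proof.
move=> /subnKC <-; rewrite /motzkin; elim: (n - i)%N => [|d IH]; first by rewrite addn0.
rewrite addnS /= nth_rcons size_motzkin_list IH.
by have -> : (i < (i + d).+1)%N by lia.
Qed.

Lemma motzkinS n :
  motzkin n.+1 = (motzkin n + \sum_(i < n) motzkin i * motzkin (n.-1 - i))%N.
Proof.
rewrite {1}/motzkin /= nth_rcons size_motzkin_list ltnn eqxx /motzkin_next.
rewrite size_motzkin_list /= nth_motzkin_list //; congr (_ + _)%N.
apply: eq_bigr => i _; have ltin := ltn_ord i.
by rewrite !nth_motzkin_list //; lia.
Qed.

Definition motzkin_poly N : {poly int} := \poly_(i < N) motzkinZ i.

Lemma pow_coef_motzkin N K n :
  (n < N)%N -> pow_coef motzkinZ K n = (motzkin_poly N ^+ K)`_n.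
Proof.
elim: K n => [|K IH] n ltnN /=; first by rewrite expr0 coef1.
rewrite exprS coefM; apply: eq_bigr => i _.
by rewrite IH ?coef_poly; [rewrite (leq_ltn_trans (leq_ord i)) | lia].
Qed.

Lemma motzkin_poly_eq N m : (m < N)%N ->
  (motzkin_poly N)`_m = (1 + 'X * motzkin_poly N + 'X^2 * motzkin_poly N ^+ 2)`_m.
Proof.
move=> ltmN; rewrite !coefD coef1 coefXM coefXnM coef_poly ltmN.
case: m ltmN => [|[|m]] ltmN.
- by rewrite !addr0.
- by rewrite add0r coef_poly ltnW // /motzkinZ motzkinS big_ord0 addn0 addr0.
rewrite add0r coef_poly ltnW // subn2 expr2 coefM /motzkinZ motzkinS PoszD.
congr (_ + _); rewrite -natz natr_sum; apply: eq_bigr => i _.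
have ltiN : (i < N)%N by have := ltn_ord i; lia.
have ltmiN : (m - i < N)%N by lia.
by rewrite natrM !natz !coef_poly ltiN ltmiN.
Qed.

Lemma coef_Xn_motzkin_pow N n k : let P := motzkin_poly N in (n.+1 < N)%N ->
  ('X^k * P ^+ k.+1)`_n.+1 = (if k is j.+1 then ('X^j * P ^+ k)`_n else 0)
    + ('X^k * P ^+ k.+1)`_n + ('X^(k.+1) * P ^+ k.+2)`_n.
Proof.
move=> P ltnN; set E := P - (1 + 'X * P + 'X^2 * P ^+ 2).
have coefE0 p : (p * E)`_n.+1 = 0.
  rewrite coefM big1 // => i _; rewrite coefB motzkin_poly_eq ?subrr ?mulr0 //.
  by have := ltn_ord i; lia.
have coefXS j (p : {poly int}) : ('X^(j.+1) * p)`_n.+1 = ('X^j * p)`_n.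
  by rewrite !coefXnM ltnS subSS.
rewrite -coefXS -(coefXS k.+1); transitivity (('X^k * P ^+ k)`_n.+1 +
    ('X^(k.+1) * P ^+ k.+1)`_n.+1 + ('X^(k.+2) * P ^+ k.+2)`_n.+1).
  apply/eqP; rewrite -subr_eq0 -!coefD -coefB.
  have -> : 'X^k * P ^+ k.+1 - ('X^k * P ^+ k + 'X^(k.+1) * P ^+ k.+1 + 'X^(k.+2) * P ^+ k.+2)
      = ('X^k * P ^+ k) * E by rewrite /E !(exprS 'X) !(exprS P); ring.
  by rewrite coefE0.
by case: k => [|k]; rewrite ?coefXS // expr0 mul1r expr0 coef1.
Qed.

Lemma mpath0E N n k : (n < N)%N -> mpath n 0 k = ('X^k * motzkin_poly N ^+ k.+1)`_n.
Proof.
elim: n k => [|n IH] k ltnN.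
  by rewrite coefXnM; case: k => [|k] //=; rewrite expr1 coef_poly ltnN.
by rewrite coef_Xn_motzkin_pow //; case: k => [|k]; rewrite -!IH ?(ltnW ltnN).
Qed.

Definition hankel_entry (m : nat) : int := if m is m'.+1 then mpath m' 0 2 else 0.

Lemma coefK_motzkin3 m : Defs.coefK motzkinZ 3 (m%:Z + -3) = hankel_entry m.
Proof.
case: m => [|[|[|m]]] //.
have -> : m.+3%:Z + -3 = m%:Z by rewrite -[m.+3]addn3 PoszD addrK.
change (pow_coef motzkinZ 3 m = mpath m.+2 0 2).
rewrite (@pow_coef_motzkin m.+3) 1?(@mpath0E m.+3) ?coefXnM ?subn2 //.
by rewrite ltnW // ltnW.
Qed.

Definition rho (l : nat) : int := nth 0 [:: 1; -1; 0] (l %% 3).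

Lemma rhoS3 l : rho l.+3 = rho l.
Proof. by rewrite /rho -addn3 modnDr. Qed.

Lemma rho_sum l : rho l + rho l.+1 + rho l.+2 = 0.
Proof.
rewrite /rho -[l.+2]addn2 -[l.+1]addn1 -(modnDml l 1) -(modnDml l 2).
by have := ltn_pmod l (isT : (0 < 3)%N); case: (l %% 3)%N => [|[|[|]]].
Qed.

Definition rho_cut (l : nat) : int := if (l < 2)%N then 0 else rho l.

Lemma rho_cut_step k :
  (if k is j.+1 then rho_cut j else 0) + rho_cut k + rho_cut k.+1 = (k == 2%N)%:R.
Proof. by case: k => [|[|[|k]]] //; rewrite /rho_cut /= rho_sum. Qed.

Lemma sum_rho_cut_mpath1 B k : (k.+1 < B)%N ->
  \sum_(l < B) rho_cut l * mpath 1 l k = (k == 2%N)%:R.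
Proof.
move=> ltkB; rewrite -rho_cut_step.
under eq_bigr => l _ do rewrite /= mulrDr mulrDr.
rewrite !big_split !sum_mul_delta ltkB (ltnW ltkB).
case: k ltkB => [|k] ltkB; last by rewrite sum_mul_delta (ltnW (ltnW ltkB)).
by rewrite big1 // => l _; rewrite mulr0.
Qed.

Lemma sum_rho_cut_mpath B j : (j < B)%N ->
  \sum_(l < B) rho_cut l * mpath j 0 l = hankel_entry j.
Proof.
case: j => [|j] ltjB.
  by under eq_bigr => l _ do rewrite /= eq_sym; rewrite sum_mul_delta ltjB.
have mpathS1 (l : 'I_B) : mpath j.+1 0 l = \sum_(k < B.+1) mpath 1 l k * mpath j k 0.
  by rewrite mpathC -add1n (@mpathD 1 j l 0 B.+1) // addn1 ltnS.
under eq_bigr => l _ do rewrite mpathS1 big_distrr.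
rewrite exchange_big /= (eq_bigr (fun k : 'I_B.+1 => mpath j k 0 * (k == 2%N :> nat)%:R)).
  have lt2B : (2 < B.+1)%N by lia.
  by rewrite (sum_mul_delta _ _ (fun k => mpath j k 0)) lt2B mpathC.
move=> k _; under eq_bigr => l _ do rewrite mulrA.
rewrite -big_distrl /= mulrC; have [ltjk | lekj] := ltnP j k.
  by rewrite mpathC mpath_far ?mul0r ?mulr0.
by rewrite sum_rho_cut_mpath1 //; lia.
Qed.

Lemma sum_mpath2_mpath B j a : (j < B)%N ->
  \sum_(l < B) (mpath 2 l a - mpath 1 l a *+ 2) * mpath j 0 l = mpath j a 2.
Proof.
move=> ltjB; rewrite mpathC.
under eq_bigr => l _ do rewrite mulrBl mulrnAl mulrC [_ * mpath j 0 l]mulrC.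
rewrite sumrB sumrMnl -(@mpathD j 2 0 a B) // -(@mpathD j 1 0 a B) //.
by rewrite addn2 addn1 !mpathSl /=; ring.
Qed.

(* With A the transfer matrix of Motzkin steps, row 0 comes from rho_cut A = e_2
   and row a.+1 from (A^2 - 2A) e_0 = e_2. *)
Definition kcoef (k l : nat) : int :=
  if k is a.+1 then mpath 2 l a - mpath 1 l a *+ 2 else rho_cut l.

(* The solution of sigma b.+4 + sigma b.+2 + sigma b = 0 with initial values
   0, 1, 1, 0, as required to undo ymx in kred_combination. *)
Definition sigma (b : nat) : int := - (-1) ^+ b * rho b.+2.

Lemma sigma_sum b : sigma b.+4 + sigma b.+2 + sigma b = 0.
Proof.
rewrite /sigma !rhoS3 -[RHS](mulr0 (- (-1) ^+ b)) -(rho_sum b.+1) !exprS; ring.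
Qed.

Definition kred (i l : nat) : int :=
  if i is b.+1 then (l == b.+2)%:R + sigma b * (l == odd b)%:R else rho_cut l.

Arguments kred : simpl never.

Definition ymx (i b : nat) : int :=
  match i, b with
  | 0, 0 => 1
  | a.+1, c.+1 => (c == a)%:R + (c.+2 == a)%:R + (c.+4 == a)%:R
  | _, _ => 0
  end.

Lemma kred_combination a l : kred a.+1 l + (if a is c.+2 then kred c.+1 l else 0)
  + (if a is c.+4 then kred c.+1 l else 0) = kcoef a.+1 l.
Proof.
case: a => [|[|[|[|a]]]]; rewrite /kred /=; try by rewrite /sigma /rho /=; ring.
have sigmaS4 : sigma a.+4 = - sigma a.+2 - sigma a.
  by rewrite -[LHS]subr0 -(sigma_sum a); ring.
by rewrite !negbK sigmaS4; ring.
Qed.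

Definition path_mx N : 'M[int]_N := \matrix_(j, l) mpath j 0 l.

Definition lfactor (i k : nat) : int :=
  match i, k with
  | 0, 0 => 1
  | i'.+1, k'.+1 => mpath i' 0 k'
  | _, _ => 0
  end.

Definition rfactor (k j : nat) : int := if k is c.+1 then mpath j c 2 else hankel_entry j.

Lemma hankel_lfactor N :
  \matrix_(i, j < N) hankel_entry (i + j) =
  \matrix_(i, k < N) lfactor i k *m \matrix_(k, j < N) rfactor k j.
Proof.
apply/matrixP => i j; rewrite !mxE; case: N i j => [[]//|N] [i lti] j /=.
rewrite big_ord_recl !mxE /=; case: i lti => [|i] lti.
  by rewrite mul1r big1 ?addr0 // => k _; rewrite !mxE mul0r.
rewrite [lfactor _ _]/= mul0r add0r addSn [hankel_entry _]/= (@mpathD i j 0 2 N) //.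
by apply: eq_bigr => k _; rewrite !mxE.
Qed.

Lemma rfactor_kcoef N :
  \matrix_(k, j < N) rfactor k j = \matrix_(k, l < N) kcoef k l *m (path_mx N)^T.
Proof.
apply/matrixP => k j; rewrite !mxE.
transitivity (\sum_(l < N) kcoef k l * mpath j 0 l).
  by case: k => [[|k] ltk]; rewrite ?sum_rho_cut_mpath ?sum_mpath2_mpath.
by apply: eq_bigr => l _; rewrite !mxE.
Qed.

Lemma kcoef_kred N :
  \matrix_(k, l < N) kcoef k l = \matrix_(i, b < N) ymx i b *m \matrix_(b, l < N) kred b l.
Proof.
apply/matrixP => i l; rewrite !mxE; case: N i l => [[]//|N] [i lti] l /=.
rewrite big_ord_recl !mxE /=; case: i lti => [|a] lta.
  by rewrite mul1r big1 ?addr0 // => k _; rewrite !mxE mul0r.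
rewrite mul0r add0r -kred_combination.
have ymxS c : ymx a.+1 c.+1 = (c == a)%:R + (c.+2 == a)%:R + (c.+4 == a)%:R by [].
under eq_bigr => c _ do rewrite !mxE lift0 ymxS !mulrDl.
rewrite ltnS in lta; rewrite !big_split /= !(sum_delta_mul _ _ (fun c => kred c.+1 l)) lta.
congr (_ + _ + _); clear ymxS.
- case: a lta => [|[|a]] lta; try by rewrite big1 // => c _; rewrite mul0r.
  by rewrite (sum_delta_mul _ _ (fun c => kred c.+1 l)) ifT //; lia.
- case: a lta => [|[|[|[|a]]]] lta; try by rewrite big1 // => c _; rewrite mul0r.
  by rewrite (sum_delta_mul _ _ (fun c => kred c.+1 l)) ifT //; lia.
Qed.

Lemma det_unitrig (R : comRingType) n (A : 'M[R]_n) :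
  is_trig_mx A -> (forall i, A i i = 1) -> \det A = 1.
Proof. by move=> /det_trig -> A1; rewrite big1. Qed.

Lemma det_lfactor N : \det (\matrix_(i, k < N) lfactor i k) = 1.
Proof.
apply: det_unitrig => [|[[|i] lti]]; rewrite ?mxE //=; last exact: (mpath_top i 0).
apply/is_trig_mxP => -[[|i] lti] [[|k] ltk]; rewrite mxE //= => ltik.
by rewrite mpath_far.
Qed.

Lemma det_path_mx N : \det (path_mx N) = 1.
Proof.
apply: det_unitrig => [|i]; rewrite ?mxE; last exact: (mpath_top i 0).
by apply/is_trig_mxP => i j ltij; rewrite mxE mpath_far.
Qed.

Lemma det_ymx N : \det (\matrix_(i, b < N) ymx i b) = 1.
Proof.
apply: det_unitrig => [|[[|a] lta]]; rewrite ?mxE //=; last first.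
  by rewrite eqxx (_ : a.+2 == a = false) 1?(_ : a.+4 == a = false) ?addr0 //; lia.
apply/is_trig_mxP => -[[|a] lta] [[|c] ltc]; rewrite mxE //= => ltac.
rewrite (_ : c == a = false) 1?(_ : c.+2 == a = false) 1?(_ : c.+4 == a = false) //; lia.
Qed.

Lemma det_hankel_kred N :
  hankel_det motzkinZ 3 (-3) N = \det (\matrix_(i, l < N) kred i l).
Proof.
rewrite /hankel_det; have -> : \matrix_(i, j < N) Defs.coefK motzkinZ 3 ((i + j)%:Z + -3) =
    \matrix_(i, j < N) hankel_entry (i + j).
  by apply/matrixP => i j; rewrite !mxE coefK_motzkin3.
rewrite hankel_lfactor rfactor_kcoef kcoef_kred !det_mulmx det_tr.
by rewrite det_lfactor det_path_mx det_ymx mul1r mul1r mulr1.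
Qed.

Lemma det_block_schur (R : comRingType) m n (A : 'M[R]_m) (B : 'M_(m, n)) (C : 'M_(n, m)) :
  \det (block_mx A B C 1%:M) = \det (A - B *m C).
Proof.
have -> : block_mx A B C 1%:M = block_mx 1%:M B 0 1%:M *m block_mx (A - B *m C) 0 C 1%:M.
  by rewrite mulmx_block !mul1mx !mul0mx !mulmx1 !add0r subrK.
by rewrite det_mulmx det_ublock det_lblock !det1 !mul1r mulr1.
Qed.

Lemma det_arrow (R : comRingType) m (A : 'M[R]_(1 + m)) : drsubmx A = 1%:M ->
  \det A = A 0 0 - \sum_(k < m) A 0 (rshift 1 k) * A (rshift 1 k) 0.
Proof.
move=> A1; rewrite -[in LHS](submxK A) A1 det_block_schur det_mx11 !mxE.
under eq_bigr => k _ do rewrite !mxE.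
by rewrite (_ : lshift m 0 = 0) //; apply: val_inj.
Qed.

Definition alt_sum m : int := \sum_(x < m | odd x != odd m) rho x.+2 * sigma x.

(* Expanding along the last row, whose only nonzero entry is sigma m in column
   odd m, leaves a bordered identity matrix. *)
Lemma det_kred m : \det (\matrix_(i, l < m.+2) kred i l) = sigma m * alt_sum m.
Proof.
set K := \matrix_(i, l) _.
have lt_odd : (odd m < m.+2)%N by case: (odd m).
pose c0 : 'I_m.+2 := Ordinal lt_odd.
rewrite (expand_det_row _ ord_max) (bigD1 c0) //= big1 ?addr0; last first.
  move=> j ne_jc0; have {}ne_jc0 : (j == odd m :> nat) = false by exact: negbTE.
  by rewrite mxE /kred /= ltn_eqF // ne_jc0 mulr0 addr0 mul0r.
rewrite mxE /kred /= ltn_eqF // eqxx mulr1 add0r /cofactor.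
have lift_c0S (k : 'I_m) : lift c0 (rshift 1 k) = k.+2 :> nat.
  by rewrite /= /bump; case: (odd m).
have lift_c00 : lift c0 0 = ~~ odd m :> nat by rewrite /= /bump; case: (odd m).
rewrite det_arrow; last first.
  apply/matrixP => x y; rewrite !mxE lift_max lift_c0S /kred /= add0n eqSS eq_sym.
  by rewrite (_ : (y.+2 == odd x) = false) ?mulr0 ?addr0 //; case: (odd x).
rewrite !mxE lift_max lift_c00.
under eq_bigr => k _ do rewrite !mxE !lift_max lift_c0S lift_c00.
have sign : (-1) ^+ (@ord_max m.+1 + c0)%N = -1 :> int.
  by rewrite -signr_odd /= oddD oddb; case: (odd m).
have -> : kred 0 (~~ odd m) = 0 by case: (odd m).
rewrite sign sub0r mulN1r opprK /alt_sum [in RHS]big_mkcond; congr (_ * _).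
apply: eq_bigr => k _; rewrite /kred /rho_cut /=.
by case: (odd m); case: (odd k); rewrite /= ?mulr0 ?mulr1 ?addr0 ?add0r.
Qed.

Lemma alt_sumSS m : alt_sum m.+2 = alt_sum m + rho m.+3 * sigma m.+1.
Proof.
rewrite /alt_sum !(big_mkcond (fun x : 'I_ _ => _)) !big_ord_recr /= !negbK eqxx addr0.
by rewrite -big_mkcond; case: (odd m).
Qed.

Lemma div3_rho_sqr m : (m.+3 %/ 3)%:Z = (m.+1 %/ 3)%:Z + rho m ^+ 2.
Proof.
rewrite /rho; have := ltn_pmod m (isT : (0 < 3)%N).
case E: (m %% 3)%N => [|[|[|]]] // _; rewrite /= -PoszD; congr Posz; lia.
Qed.

Lemma alt_sumE m : alt_sum m = (-1) ^+ m * (m.+1 %/ 3)%:Z.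
Proof.
suff: (alt_sum m = (-1) ^+ m * (m.+1 %/ 3)%:Z) /\
      (alt_sum m.+1 = (-1) ^+ m.+1 * (m.+2 %/ 3)%:Z) by case.
elim: m => [|m [IHm IHm1]]; first by split; rewrite /alt_sum big_mkcond ?big_ord_recr big_ord0.
split=> //; rewrite alt_sumSS IHm div3_rho_sqr /sigma rhoS3 !exprS; ring.
Qed.

Lemma hankel_det_motzkin3 m :
  hankel_det motzkinZ 3 (-3) m.+2 = - rho m.+2 * (m.+1 %/ 3)%:Z.
Proof.
rewrite det_hankel_kred det_kred alt_sumE /sigma.
have sign_sqr : (-1) ^+ m * (-1) ^+ m = 1 :> int by rewrite -expr2 sqrr_sign.
transitivity (- ((-1) ^+ m * (-1) ^+ m) * rho m.+2 * (m.+1 %/ 3)%:Z); first ring.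
by rewrite sign_sqr mulN1r.
Qed.

Lemma rho_mul3D n r : rho (3 * n + r) = rho r.
Proof. by rewrite /rho mulnC modnMDl. Qed.

Theorem proposition4p2 :
  hankel_det motzkinZ 3 (-3) 0 = 1 /\
  hankel_det motzkinZ 3 (-3) 1 = 0 /\
  hankel_det motzkinZ 3 (-3) 2 = 0 /\
  hankel_det motzkinZ 3 (-3) 3 = 0 /\
  (forall k : nat, (1 <= k)%N ->
     hankel_det motzkinZ 3 (-3) (3 * k + 1) = k%:Z /\
     hankel_det motzkinZ 3 (-3) (3 * k + 2) = 0 /\
     hankel_det motzkinZ 3 (-3) (3 * k + 3) = - k%:Z).
Proof.
do 2![split; first by rewrite /hankel_det ?det_mx00 ?det_mx11 ?mxE].
do 2![split; first by rewrite hankel_det_motzkin3 mulr0].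
case=> [//|j] _.
have hankel_det_3k r : (0 < r <= 3)%N ->
    hankel_det motzkinZ 3 (-3) (3 * j.+1 + r) = - rho r * j.+1%:Z.
  move=> /andP[r_gt0 r_le3]; rewrite (_ : 3 * j.+1 + r = (3 * j + r.+1).+2)%N; last by lia.
  rewrite hankel_det_motzkin3 (_ : (3 * j + r.+1).+2 = 3 * j.+1 + r)%N; last by lia.
  by rewrite rho_mul3D (_ : (3 * j + r.+1).+1 %/ 3 = j.+1)%N //; lia.
by rewrite !hankel_det_3k // /rho /= ?opprK ?mul1r ?mul0r ?mulN1r.
Qed.
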